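(* Let $T>0$, $d\ge 1$, $\gamma\in(0,\infty)$, let $f,h,g:[0,T]\to\mathbb{R}$ be continuous functions, and let $\mathbf{m},x_0,x_T\in\mathbb{R}^d$ be fixed vectors. Consider the deterministic optimal control problem $$\min_{\mathbf{u}_{\cdot,\gamma}}\ \int_0^T \tfrac12\|\mathbf{u}_{t,\gamma}\|_2^2\,dt+\tfrac{\gamma}{2}\|\mathbf{x}_T^u-x_T\|_2^2$$ over controls $\mathbf{u}_{\cdot,\gamma}:[0,T]\to\mathbb{R}^d$, subject to the dynamics $$\frac{d\mathbf{x}_t}{dt}=f_t\mathbf{x}_t+h_t\mathbf{m}+g_t\mathbf{u}_{t,\gamma},\qquad \mathbf{x}_0^u=x_0,$$ where $\mathbf{x}^u_t$ denotes the resulting state trajectory. Define $\bar f_{s:t}=\int_s^t f_z\,dz$, $\bar f_t=\bar f_{0:t}$, $\bar h_{s:t}=\int_s^t e^{-\bar f_z}h_z\,dz$, $\bar h_t=\bar h_{0:t}$, $\bar g^2_{s:t}=\int_s^t e^{-2\bar f_z}g_z^2\,dz$, $\bar g^2_t=\bar g^2_{0:t}$, and $d_{t,\gamma}=\gamma^{-1}+e^{2\bar f_T}\bar g^2_{t:T}$. Then the optimal controller, written in terms of the current state $\mathbf{x}_t$ of the optimal trajectory, is $$\mathbf{u}^*_{t,\gamma}=g_t e^{\bar f_{t:T}}\,\frac{x_T-e^{\bar f_{t:T}}\mathbf{x}_t-\mathbf{m}\,e^{\bar f_T}\bar h_{t:T}}{d_{t,\gamma}},$$ and the optimal trajectory is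 given, for all $t\in[0,T]$, by $$\mathbf{x}_t=e^{\bar f_t}\left(\frac{d_{t,\gamma}}{d_{0,\gamma}}x_0+\frac{e^{\bar f_T}\bar g^2_t}{d_{0,\gamma}}x_T+\Big(\bar h_t-\frac{e^{2\bar f_T}\bar h_T\bar g^2_t}{d_{0,\gamma}}\Big)\mathbf{m}\right).$$
   Context: All norms are Euclidean. The quantity $\gamma$ is the terminal penalty coefficient; $x_0$ is the prescribed initial state and $x_T$ the prescribed target terminal point. *)

From Stdlib Require Import Reals Lra.
From Coquelicot Require Import Coquelicot.
Open Scope R_scope.

(* Vectors of R^d are represented as functions nat -> R, of which only the
   components i < d are relevant. *)
Definition vec := nat -> R.

Definition sqnorm (d : nat) (v : vec) : R :=
  sum_f_R0 (fun i => (v i) ^ 2) (pred d).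

Definition cont_on (a b : R) (phi : R -> R) : Prop :=
  forall t, a <= t <= b ->
    filterlim phi (within (fun z => a <= z <= b) (locally t)) (locally (phi t)).

Definition fbar (f : R -> R) (s t : R) : R := RInt f s t.
Definition hbar (f h : R -> R) (s t : R) : R :=
  RInt (fun z => exp (- fbar f 0 z) * h z) s t.
Definition g2bar (f g : R -> R) (s t : R) : R :=
  RInt (fun z => exp (-2 * fbar f 0 z) * (g z) ^ 2) s t.
Definition dgam (T gam : R) (f g : R -> R) (t : R) : R :=
  / gam + exp (2 * fbar f 0 T) * g2bar f g t T.

Definition admissible_control (d : nat) (T : R) (u : R -> vec) : Prop :=
  forall i, (i < d)%nat -> cont_on 0 T (fun t => u t i).

Definition is_trajectory (d : nat) (T : R) (f h g : R -> R) (m x0 : vec)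
    (u : R -> vec) (x : R -> vec) : Prop :=
  forall i, (i < d)%nat ->
    cont_on 0 T (fun t => x t i) /\ x 0 i = x0 i /\
    forall t, 0 < t < T ->
      is_derive (fun s => x s i) t (f t * x t i + h t * m i + g t * u t i).

Definition cost (d : nat) (T gam : R) (xT : vec) (u : R -> vec) (x : R -> vec) : R :=
  RInt (fun t => / 2 * sqnorm d (u t)) 0 T
  + gam / 2 * sqnorm d (fun i => x T i - xT i).

Definition xstar (T gam : R) (f h g : R -> R) (m x0 xT : vec) (t : R) : vec :=
  fun i =>
    exp (fbar f 0 t) *
    (dgam T gam f g t / dgam T gam f g 0 * x0 i
     + exp (fbar f 0 T) * g2bar f g 0 t / dgam T gam f g 0 * xT i
     + (hbar f h 0 t
        - exp (2 * fbar f 0 T) * hbar f h 0 T * g2bar f g 0 t / dgam T gam f g 0)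
       * m i).

Definition ustar (T gam : R) (f h g : R -> R) (m xT : vec) (x : R -> vec) (t : R) : vec :=
  fun i =>
    g t * exp (fbar f t T) *
    ((xT i - exp (fbar f t T) * x t i - m i * exp (fbar f 0 T) * hbar f h t T)
     / dgam T gam f g t).

(* Write F, H, G for the primitives fbar_{0:t}, hbar_{0:t}, g2bar_{0:t} and
   p_t = e^{-F_t} g_t.  Variation of constants gives, for every admissible
   control u, x^u_T = e^{F_T} (x_0 + m H_T + \int_0^T p u), so each coordinate of
   the cost is  1/2 \int u^2 + gam/2 (b (a + \int p u) - y)^2  with b = e^{F_T},
   a = x_0 + m H_T and y the target.  Its minimiser is u = lam p with
   lam = b (y - b a) / (1/gam + b^2 G_T): completing the square, the excess cost
   of any u is 1/2 \int (u - lam p)^2 + gam/2 b^2 (\int p (u - lam p))^2.  The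
   feedback law u*, evaluated along the closed-form x*, is exactly lam p, and x*
   solves the state equation driven by it. *)

From Stdlib Require Import Reals Lra Lia.
From Coquelicot Require Import Coquelicot.
Open Scope R_scope.

(* A function continuous on [a, b] is handled through its extension
   [extend a b phi], constant outside [a, b] and continuous on all of R. *)
Definition clamp (a b t : R) : R := Rmax a (Rmin b t).

Definition extend (a b : R) (phi : R -> R) (t : R) : R := phi (clamp a b t).

Lemma clamp_in a b t : a <= b -> a <= clamp a b t <= b.
Proof. intros; unfold clamp, Rmax, Rmin; repeat destruct Rle_dec; lra. Qed.

Lemma clamp_id a b t : a <= t <= b -> clamp a b t = t.
Proof. intros; unfold clamp, Rmax, Rmin; repeat destruct Rle_dec; lra. Qed.

Lemma clamp_lipschitz a b s t : Rabs (clamp a b s - clamp a b t) <= Rabs (s - t).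
Proof. unfold clamp, Rmax, Rmin; repeat destruct Rle_dec; split_Rabs; lra. Qed.

Lemma extend_id a b (phi : R -> R) t : a <= t <= b -> extend a b phi t = phi t.
Proof. intros; unfold extend; rewrite clamp_id; auto. Qed.

Lemma locally_interior a b t (P : R -> Prop) :
  a < t < b -> (forall s, a < s < b -> P s) -> locally t P.
Proof.
  intros Ht HP. apply (locally_interval _ _ (Finite a) (Finite b)); simpl; try lra.
  intros; apply HP; lra.
Qed.

Lemma continuous_extend a b (phi : R -> R) :
  a <= b -> cont_on a b phi -> forall t, continuous (extend a b phi) t.
Proof.
  intros Hab Hc t. unfold continuous, extend.
  eapply filterlim_comp; [| apply (Hc _ (clamp_in a b t Hab))].
  intros P [eps HP]. exists eps. intros s Hs. apply HP.
  - eapply Rle_lt_trans; [apply clamp_lipschitz | exact Hs].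
  - apply clamp_in; lra.
Qed.

Lemma cont_on_agree a b (phi psi : R -> R) :
  (forall t, a <= t <= b -> phi t = psi t) ->
  (forall t, a <= t <= b -> continuous psi t) -> cont_on a b phi.
Proof.
  intros He Hc t Ht. rewrite (He t Ht).
  apply (filterlim_within_ext _ psi phi); [intros; symmetry; auto |].
  eapply filterlim_filter_le_1; [apply filter_le_within | apply Hc; exact Ht].
Qed.

Lemma cont_on_continuous a b (psi : R -> R) :
  (forall t, a <= t <= b -> continuous psi t) -> cont_on a b psi.
Proof. apply cont_on_agree; auto. Qed.

Lemma cont_on_mult a b (phi psi : R -> R) : a <= b ->
  cont_on a b phi -> cont_on a b psi -> cont_on a b (fun t => phi t * psi t).
Proof.
  intros Hab Hphi Hpsi.
  apply (cont_on_agree _ _ _ (fun t => extend a b phi t * extend a b psi t)).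
  - intros; rewrite !extend_id; auto.
  - intros; apply (continuous_mult (extend a b phi)); apply continuous_extend; auto.
Qed.

Lemma cont_on_plus a b (phi psi : R -> R) : a <= b ->
  cont_on a b phi -> cont_on a b psi -> cont_on a b (fun t => phi t + psi t).
Proof.
  intros Hab Hphi Hpsi.
  apply (cont_on_agree _ _ _ (fun t => extend a b phi t + extend a b psi t)).
  - intros; rewrite !extend_id; auto.
  - intros; apply (continuous_plus (extend a b phi)); apply continuous_extend; auto.
Qed.

Lemma cont_on_const a b c : cont_on a b (fun _ => c).
Proof. apply cont_on_continuous; intros; apply continuous_const. Qed.

Lemma ex_RInt_cont_on a b (phi : R -> R) : a <= b -> cont_on a b phi -> ex_RInt phi a b.
Proof.
  intros Hab Hc. apply (ex_RInt_ext (extend a b phi)).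
  - rewrite Rmin_left, Rmax_right by lra. intros; apply extend_id; lra.
  - apply (@ex_RInt_continuous R_CompleteNormedModule); intros.
    apply continuous_extend; auto.
Qed.

Lemma ex_RInt_ext_R (phi psi : R -> R) a b :
  (forall s, Rmin a b < s < Rmax a b -> phi s = psi s) -> ex_RInt phi a b -> ex_RInt psi a b.
Proof. apply ex_RInt_ext. Qed.

Lemma RInt_ext_R (phi psi : R -> R) a b :
  (forall s, Rmin a b < s < Rmax a b -> phi s = psi s) -> RInt phi a b = RInt psi a b.
Proof. apply RInt_ext. Qed.

Lemma RInt_scal_R (phi : R -> R) a b c : ex_RInt phi a b ->
  RInt (fun s => c * phi s) a b = c * RInt phi a b.
Proof. apply (@RInt_scal R_CompleteNormedModule). Qed.

Lemma RInt_plus_R (phi psi : R -> R) a b : ex_RInt phi a b -> ex_RInt psi a b ->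
  RInt (fun s => phi s + psi s) a b = RInt phi a b + RInt psi a b.
Proof. apply (@RInt_plus R_CompleteNormedModule). Qed.

Lemma is_derive_RInt_continuous (p : R -> R) a :
  (forall t, continuous p t) -> forall t, is_derive (fun s => RInt p a s) t (p t).
Proof.
  intros Hc t. apply (is_derive_RInt p _ a); [| apply Hc].
  apply filter_forall; intros s; apply (@RInt_correct R_CompleteNormedModule).
  apply (@ex_RInt_continuous R_CompleteNormedModule); auto.
Qed.

Lemma exp_double x : exp (2 * x) = exp x ^ 2.
Proof. replace (2 * x) with (x + x) by ring. rewrite exp_plus. ring. Qed.

Lemma is_derive_exp_comp (F : R -> R) t l :
  is_derive F t l -> is_derive (fun s => exp (F s)) t (l * exp (F t)).
Proof. intros HF. apply (is_derive_comp exp F); [apply is_derive_exp | exact HF]. Qed.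

Lemma RInt_agree a b (phi psi : R -> R) s t :
  (forall z, continuous psi z) -> (forall z, a <= z <= b -> phi z = psi z) ->
  a <= s <= b -> a <= t <= b -> RInt phi s t = RInt psi a t - RInt psi a s.
Proof.
  intros Hc He Hs Ht.
  assert (Hint : forall u v, ex_RInt psi u v)
    by (intros; apply (@ex_RInt_continuous R_CompleteNormedModule); auto).
  assert (Hch : RInt psi a s + RInt psi s t = RInt psi a t)
    by (apply (@RInt_Chasles R_CompleteNormedModule); auto).
  rewrite (RInt_ext phi psi); [lra |].
  intros z Hz. apply He. split.
  - apply Rle_trans with (Rmin s t); [apply Rmin_glb|]; lra.
  - apply Rle_trans with (Rmax s t); [|apply Rmax_lub]; lra.
Qed.

Lemma RInt_derive_interior a b (X phi : R -> R) : a < b ->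
  cont_on a b X -> cont_on a b phi ->
  (forall t, a < t < b -> is_derive X t (phi t)) -> RInt phi a b = X b - X a.
Proof.
  intros Hab HX Hphi HdX.
  (* X minus a primitive of phi has zero derivative inside [a, b]; conclude by the MVT. *)
  set (pe := extend a b phi).
  assert (Hpe : forall t, continuous pe t) by (apply continuous_extend; auto; lra).
  set (D := fun t => extend a b X t - RInt pe a t).
  destruct (MVT_gen D a b (fun _ => 0)) as [c [_ Hc]].
  - rewrite Rmin_left, Rmax_right by lra. intros t Ht.
    replace 0 with (phi t - pe t) by (unfold pe; rewrite extend_id; lra).
    apply (@is_derive_minus R_AbsRing R_NormedModule).
    + apply (is_derive_ext_loc X); [| auto].
      apply (locally_interior a b); auto. intros; rewrite extend_id; lra.
    + apply is_derive_RInt_continuous; auto.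
  - intros t _. apply continuity_pt_filterlim.
    apply (continuous_minus (extend a b X)).
    + apply continuous_extend; auto; lra.
    + apply ex_derive_continuous. eexists; apply is_derive_RInt_continuous; auto.
  - unfold D in Hc. rewrite RInt_point, !extend_id in Hc by lra.
    rewrite (RInt_ext phi pe).
    + unfold zero in Hc; simpl in Hc. lra.
    + rewrite Rmin_left, Rmax_right by lra. intros; unfold pe; rewrite extend_id; lra.
Qed.

Lemma linear_ode_integrated a b (c F x r : R -> R) : a < b ->
  (forall t, is_derive F t (c t)) -> cont_on a b x -> cont_on a b r ->
  (forall t, a < t < b -> is_derive x t (c t * x t + r t)) ->
  exp (- F b) * x b - exp (- F a) * x a = RInt (fun s => exp (- F s) * r s) a b.
Proof.
  intros Hab HF Hx Hr Hdx.
  assert (HE : forall t, is_derive (fun s => exp (- F s)) t (- c t * exp (- F t)))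
    by (intros t; apply (is_derive_exp_comp (fun s => - F s));
        apply (@is_derive_opp R_AbsRing R_NormedModule F), HF).
  assert (CE : cont_on a b (fun s => exp (- F s))).
  { apply cont_on_continuous; intros t _.
    apply (@ex_derive_continuous R_AbsRing R_NormedModule); eexists; apply HE. }
  symmetry. apply (RInt_derive_interior a b (fun s => exp (- F s) * x s)); auto.
  - apply cont_on_mult; auto; lra.
  - apply cont_on_mult; auto; lra.
  - intros t Ht.
    replace (exp (- F t) * r t)
      with (- c t * exp (- F t) * x t + exp (- F t) * (c t * x t + r t)) by ring.
    apply (is_derive_mult (fun s => exp (- F s)) x); auto.
    intros; apply Rmult_comm.
Qed.

Lemma ex_RInt_sum_f_R0 (w : nat -> R -> R) a b n :
  (forall i, (i <= n)%nat -> ex_RInt (w i) a b) ->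
  ex_RInt (fun t => sum_f_R0 (fun i => w i t) n) a b.
Proof.
  induction n as [|n IH]; intros Hw; [apply Hw; lia |].
  apply (@ex_RInt_plus R_NormedModule); [apply IH; intros |]; apply Hw; lia.
Qed.

Lemma RInt_sum_f_R0 (w : nat -> R -> R) a b n :
  (forall i, (i <= n)%nat -> ex_RInt (w i) a b) ->
  RInt (fun t => sum_f_R0 (fun i => w i t) n) a b = sum_f_R0 (fun i => RInt (w i) a b) n.
Proof.
  induction n as [|n IH]; intros Hw; [reflexivity |].
  simpl. rewrite <- IH by (intros; apply Hw; lia).
  apply RInt_plus_R; [apply ex_RInt_sum_f_R0; intros |]; apply Hw; lia.
Qed.

Lemma admissible_sq_integrable d T (u : R -> vec) i : 0 <= T -> admissible_control d T u ->
  (i < d)%nat -> ex_RInt (fun t => u t i ^ 2) 0 T.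
Proof.
  intros HT Hu Hi. apply (ex_RInt_ext_R (fun t => u t i * u t i)).
  - intros t _; ring.
  - apply ex_RInt_cont_on, cont_on_mult; auto.
Qed.

Lemma cost_componentwise d T gam xT (u x : R -> vec) : (1 <= d)%nat -> 0 <= T ->
  admissible_control d T u ->
  cost d T gam xT u x =
  sum_f_R0 (fun i => / 2 * RInt (fun t => u t i ^ 2) 0 T + gam / 2 * (x T i - xT i) ^ 2)
    (pred d).
Proof.
  intros Hd HT Hu.
  assert (Hsq : forall i, (i <= pred d)%nat -> ex_RInt (fun t => u t i ^ 2) 0 T)
    by (intros; apply (admissible_sq_integrable d); auto; lia).
  unfold cost, sqnorm.
  rewrite RInt_scal_R by (apply ex_RInt_sum_f_R0; auto).
  rewrite (RInt_sum_f_R0 (fun i t => u t i ^ 2)) by auto.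
  rewrite plus_sum, !scal_sum. f_equal; apply sum_eq; intros; ring.
Qed.

Definition scalar_lq_cost (T gam a b y : R) (p v : R -> R) : R :=
  / 2 * RInt (fun s => v s ^ 2) 0 T
  + gam / 2 * (b * (a + RInt (fun s => p s * v s) 0 T) - y) ^ 2.

Definition scalar_lq_gain (gam a b y G : R) : R := b * (y - b * a) / (/ gam + b ^ 2 * G).

Lemma scalar_lq_cost_ext T gam a b y (p v w : R -> R) : 0 <= T ->
  (forall s, 0 <= s <= T -> v s = w s) ->
  scalar_lq_cost T gam a b y p v = scalar_lq_cost T gam a b y p w.
Proof.
  intros HT Hvw. unfold scalar_lq_cost.
  rewrite (RInt_ext_R (fun s => v s ^ 2) (fun s => w s ^ 2)),
    (RInt_ext_R (fun s => p s * v s) (fun s => p s * w s)); [reflexivity | |];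
    rewrite Rmin_left, Rmax_right by lra; intros s Hs; rewrite Hvw by lra; reflexivity.
Qed.

Lemma RInt_expanded_square_ge0 T lam (p v : R -> R) : 0 <= T ->
  ex_RInt (fun s => p s ^ 2) 0 T -> ex_RInt (fun s => p s * v s) 0 T ->
  ex_RInt (fun s => v s ^ 2) 0 T ->
  0 <= RInt (fun s => v s ^ 2) 0 T - 2 * lam * RInt (fun s => p s * v s) 0 T
       + lam ^ 2 * RInt (fun s => p s ^ 2) 0 T.
Proof.
  intros HT Hp2 Hpv Hv2.
  set (dev := fun s => v s ^ 2 + - 2 * lam * (p s * v s) + lam ^ 2 * p s ^ 2).
  assert (Hpv' : ex_RInt (fun s => - 2 * lam * (p s * v s)) 0 T)
    by (apply (@ex_RInt_scal R_NormedModule); auto).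
  assert (Hp2' : ex_RInt (fun s => lam ^ 2 * p s ^ 2) 0 T)
    by (apply (@ex_RInt_scal R_NormedModule); auto).
  assert (Hv2pv : ex_RInt (fun s => v s ^ 2 + - 2 * lam * (p s * v s)) 0 T)
    by (apply (@ex_RInt_plus R_NormedModule); auto).
  replace (RInt (fun s => v s ^ 2) 0 T - 2 * lam * RInt (fun s => p s * v s) 0 T
           + lam ^ 2 * RInt (fun s => p s ^ 2) 0 T) with (RInt dev 0 T : R)
    by (unfold dev; rewrite !RInt_plus_R, !RInt_scal_R by auto; ring).
  apply RInt_ge_0; auto.
  - apply (@ex_RInt_plus R_NormedModule); auto.
  - intros s _. replace (dev s) with ((v s - lam * p s) ^ 2) by (unfold dev; ring).
    apply pow2_ge_0.
Qed.

Lemma scalar_lq_gain_optimal T gam a b y (p v : R -> R) : 0 <= T -> 0 < gam ->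
  ex_RInt (fun s => p s ^ 2) 0 T -> ex_RInt (fun s => p s * v s) 0 T ->
  ex_RInt (fun s => v s ^ 2) 0 T ->
  let lam := scalar_lq_gain gam a b y (RInt (fun s => p s ^ 2) 0 T) in
  scalar_lq_cost T gam a b y p (fun s => lam * p s) <= scalar_lq_cost T gam a b y p v.
Proof.
  intros HT Hgam Hp2 Hpv Hv2 lam.
  assert (Hdev := RInt_expanded_square_ge0 T lam p v HT Hp2 Hpv Hv2).
  set (G := RInt (fun s => p s ^ 2) 0 T) in lam, Hdev.
  set (J := RInt (fun s => p s * v s) 0 T) in Hdev.
  set (W := RInt (fun s => v s ^ 2) 0 T) in Hdev.
  assert (HG : 0 <= G) by (apply RInt_ge_0; auto; intros; apply pow2_ge_0).
  assert (HbG : 0 <= b ^ 2 * G) by (apply Rmult_le_pos; auto; apply pow2_ge_0).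
  assert (Hgain : gam * b * (b * (a + lam * G) - y) = - lam)
    by (unfold lam, scalar_lq_gain; field; split; nra).
  assert (Hopt2 : RInt (fun s => (lam * p s) ^ 2) 0 T = lam ^ 2 * G).
  { unfold G; rewrite <- RInt_scal_R by auto. apply RInt_ext_R; intros; ring. }
  assert (Hoptp : RInt (fun s => p s * (lam * p s)) 0 T = lam * G).
  { unfold G; rewrite <- RInt_scal_R by auto. apply RInt_ext_R; intros; ring. }
  assert (0 <= gam / 2 * (b * (J - lam * G)) ^ 2)
    by (apply Rmult_le_pos; [lra | apply pow2_ge_0]).
  unfold scalar_lq_cost. rewrite Hopt2, Hoptp. fold J W.
  assert (Hsquare :
    / 2 * W + gam / 2 * (b * (a + J) - y) ^ 2
    - (/ 2 * (lam ^ 2 * G) + gam / 2 * (b * (a + lam * G) - y) ^ 2)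
    = / 2 * (W - 2 * lam * J + lam ^ 2 * G) + gam / 2 * (b * (J - lam * G)) ^ 2
      + (gam * b * (b * (a + lam * G) - y) + lam) * (J - lam * G)) by field.
  rewrite Hgain, Rplus_opp_l, Rmult_0_l in Hsquare. lra.
Qed.

Section LinearQuadraticControl.

Variables (T gam : R) (f h g : R -> R) (m x0 xT : vec).
Hypotheses (HT : 0 < T) (Hgam : 0 < gam)
  (Hf : cont_on 0 T f) (Hh : cont_on 0 T h) (Hg : cont_on 0 T g).

(* F, H, G are computed from the extensions fe, he, ge, so that they are
   differentiable on all of R; they agree with fbar, hbar, g2bar on [0, T]. *)
Let fe := extend 0 T f.
Let he := extend 0 T h.
Let ge := extend 0 T g.
Let F (t : R) : R := RInt fe 0 t.
Let p (t : R) : R := exp (- F t) * ge t.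
Let H (t : R) : R := RInt (fun z => exp (- F z) * he z) 0 t.
Let G (t : R) : R := RInt (fun z => p z ^ 2) 0 t.
Let lam (i : nat) : R := scalar_lq_gain gam (x0 i + m i * H T) (exp (F T)) (xT i) (G T).
Let xs := xstar T gam f h g m x0 xT.
Let us := ustar T gam f h g m xT xs.

Let HT0 : 0 <= T := Rlt_le _ _ HT.

Lemma F_derive t : is_derive F t (fe t).
Proof. apply is_derive_RInt_continuous, continuous_extend; auto. Qed.

Lemma exp_opp_F_derive t : is_derive (fun s => exp (- F s)) t (- fe t * exp (- F t)).
Proof.
  apply (is_derive_exp_comp (fun s => - F s)).
  apply (@is_derive_opp R_AbsRing R_NormedModule F), F_derive.
Qed.

Lemma exp_opp_F_continuous t : continuous (fun s => exp (- F s)) t.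
Proof. apply (@ex_derive_continuous R_AbsRing R_NormedModule); eexists; apply exp_opp_F_derive. Qed.

Lemma p_continuous t : continuous p t.
Proof.
  apply (continuous_mult (fun s => exp (- F s)) ge);
    [apply exp_opp_F_continuous | apply continuous_extend; auto].
Qed.

Lemma exp_opp_F_he_continuous t : continuous (fun z => exp (- F z) * he z) t.
Proof.
  apply (continuous_mult (fun s => exp (- F s)) he);
    [apply exp_opp_F_continuous | apply continuous_extend; auto].
Qed.

Lemma H_derive t : is_derive H t (exp (- F t) * he t).
Proof. apply (is_derive_RInt_continuous (fun z => exp (- F z) * he z)), exp_opp_F_he_continuous. Qed.

Lemma p2_continuous t : continuous (fun z => p z ^ 2) t.
Proof.
  apply (continuous_mult p (fun s => p s * 1)); [apply p_continuous |].
  apply (continuous_mult p (fun _ => 1)); [apply p_continuous | apply continuous_const].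
Qed.

Lemma G_derive t : is_derive G t (p t ^ 2).
Proof. apply (is_derive_RInt_continuous (fun z => p z ^ 2)), p2_continuous. Qed.

Lemma F_0 : F 0 = 0.
Proof. apply (@RInt_point R_CompleteNormedModule). Qed.

Lemma H_0 : H 0 = 0.
Proof. apply (@RInt_point R_CompleteNormedModule). Qed.

Lemma G_0 : G 0 = 0.
Proof. apply (@RInt_point R_CompleteNormedModule). Qed.

Lemma fbar_eq s t : 0 <= s <= T -> 0 <= t <= T -> fbar f s t = F t - F s.
Proof.
  apply RInt_agree; [apply continuous_extend; auto | intros; symmetry; apply extend_id; auto].
Qed.

Lemma hbar_eq s t : 0 <= s <= T -> 0 <= t <= T -> hbar f h s t = H t - H s.
Proof.
  apply RInt_agree.
  - apply exp_opp_F_he_continuous.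
  - intros z Hz. rewrite fbar_eq, F_0, Rminus_0_r by lra.
    unfold he; rewrite extend_id; auto.
Qed.

Lemma g2bar_eq s t : 0 <= s <= T -> 0 <= t <= T -> g2bar f g s t = G t - G s.
Proof.
  apply RInt_agree.
  - apply p2_continuous.
  - intros z Hz. rewrite fbar_eq, F_0, Rminus_0_r by lra.
    unfold p, ge; rewrite extend_id by auto.
    replace (-2 * F z) with (2 * - F z) by ring. rewrite exp_double. ring.
Qed.

Lemma G_le_G_T t : 0 <= t <= T -> G t <= G T.
Proof.
  intros Ht.
  assert (Hint : RInt (fun z => p z ^ 2) t T = G T - G t)
    by (apply (RInt_agree 0 T); [apply p2_continuous | reflexivity | lra | lra]).
  assert (0 <= RInt (fun z => p z ^ 2) t T).
  { apply RInt_ge_0; [lra | | intros; apply pow2_ge_0].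
    apply (@ex_RInt_continuous R_CompleteNormedModule); intros; apply p2_continuous. }
  lra.
Qed.

Lemma dgam_eq t : 0 <= t <= T -> dgam T gam f g t = / gam + exp (F T) ^ 2 * (G T - G t).
Proof.
  intros Ht. unfold dgam. rewrite fbar_eq, F_0, Rminus_0_r, g2bar_eq, exp_double by lra.
  reflexivity.
Qed.

Lemma dgam_scaled_pos t : 0 <= t <= T -> 0 < 1 + exp (F T) ^ 2 * (G T - G t) * gam.
Proof.
  intros Ht. assert (0 <= exp (F T) ^ 2 * (G T - G t) * gam); [| lra].
  apply Rmult_le_pos; [apply Rmult_le_pos; [apply pow2_ge_0 |] | lra].
  assert (HG := G_le_G_T t Ht). lra.
Qed.

Lemma xstar_eq t i : 0 <= t <= T ->
  xs t i = exp (F t) * (x0 i + m i * H t + lam i * G t).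
Proof.
  intros Ht. assert (Hd0 := dgam_scaled_pos 0 ltac:(lra)). rewrite G_0, Rminus_0_r in Hd0.
  unfold xs, xstar, lam, scalar_lq_gain.
  rewrite !dgam_eq, G_0, Rminus_0_r, !fbar_eq, F_0, !Rminus_0_r, !hbar_eq, H_0, !Rminus_0_r,
    g2bar_eq, G_0, Rminus_0_r by lra.
  rewrite exp_double. field. split; lra.
Qed.

Lemma ustar_eq t i : 0 <= t <= T -> us t i = lam i * p t.
Proof.
  intros Ht. assert (Hd0 := dgam_scaled_pos 0 ltac:(lra)). rewrite G_0, Rminus_0_r in Hd0.
  assert (Hdt := dgam_scaled_pos t Ht).
  assert (HFt := exp_pos (F t)).
  unfold us, ustar. rewrite xstar_eq, dgam_eq, !fbar_eq, F_0, Rminus_0_r, hbar_eq by lra.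
  unfold lam, scalar_lq_gain, p, ge. rewrite extend_id by lra.
  assert (Hdiff : exp (F T - F t) = exp (F T) * / exp (F t))
    by (unfold Rminus; rewrite exp_plus, exp_Ropp; reflexivity).
  rewrite Hdiff, exp_Ropp. field. repeat split; lra.
Qed.

Lemma ustar_admissible d : admissible_control d T us.
Proof.
  intros i _. apply (cont_on_agree _ _ _ (fun t => lam i * p t)).
  - intros; apply ustar_eq; auto.
  - intros; apply (continuous_mult (fun _ => lam i) p);
      [apply continuous_const | apply p_continuous].
Qed.

Lemma xstar_closed_form_derive i t :
  is_derive (fun s => exp (F s) * (x0 i + m i * H s + lam i * G s)) t
    (fe t * (exp (F t) * (x0 i + m i * H t + lam i * G t)) + he t * m i
     + ge t * (lam i * p t)).
Proof.
  auto_derive.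
  - repeat split; eexists; [apply F_derive | apply H_derive | apply G_derive].
  - replace (Derive (fun s => F s) t) with (fe t)
      by (symmetry; apply is_derive_unique, F_derive).
    replace (Derive (fun s => H s) t) with (exp (- F t) * he t)
      by (symmetry; apply is_derive_unique, H_derive).
    replace (Derive (fun s => G s) t) with (p t ^ 2)
      by (symmetry; apply is_derive_unique, G_derive).
    unfold p. rewrite exp_Ropp. field. apply Rgt_not_eq, exp_pos.
Qed.

Lemma xstar_trajectory d : is_trajectory d T f h g m x0 us xs.
Proof.
  intros i _. split; [| split].
  - apply (cont_on_agree _ _ _ (fun s => exp (F s) * (x0 i + m i * H s + lam i * G s))).
    + intros; apply xstar_eq; auto.
    + intros; apply (@ex_derive_continuous R_AbsRing R_NormedModule).
      eexists; apply xstar_closed_form_derive.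
  - rewrite xstar_eq, F_0, H_0, G_0, exp_0 by lra. ring.
  - intros t Ht.
    apply (is_derive_ext_loc (fun s => exp (F s) * (x0 i + m i * H s + lam i * G s))).
    + apply (locally_interior 0 T); auto. intros; symmetry; apply xstar_eq; lra.
    + rewrite xstar_eq, ustar_eq by lra.
      replace (f t) with (fe t) by (apply extend_id; lra).
      replace (h t) with (he t) by (apply extend_id; lra).
      replace (g t) with (ge t) by (apply extend_id; lra).
      apply xstar_closed_form_derive.
Qed.

Lemma trajectory_terminal_state d u x i :
  admissible_control d T u -> is_trajectory d T f h g m x0 u x -> (i < d)%nat ->
  x T i = exp (F T) * (x0 i + m i * H T + RInt (fun s => p s * u s i) 0 T).
Proof.
  intros Hu Hx Hi. destruct (Hx i Hi) as [Cx [Hx0 Dx]].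
  assert (Cpu : cont_on 0 T (fun s => p s * u s i)).
  { apply cont_on_mult; [lra | | apply Hu; auto].
    apply cont_on_continuous; intros; apply p_continuous. }
  assert (Cr : cont_on 0 T (fun s => h s * m i + g s * u s i)).
  { apply cont_on_plus; [lra | |]; apply cont_on_mult; auto using cont_on_const; lra. }
  assert (Dx' : forall t, 0 < t < T ->
    is_derive (fun s => x s i) t (fe t * x t i + (h t * m i + g t * u t i))).
  { intros t Ht. replace (fe t) with (f t) by (symmetry; apply extend_id; lra).
    rewrite <- Rplus_assoc. auto. }
  assert (Hforcing : RInt (fun s => exp (- F s) * (h s * m i + g s * u s i)) 0 T
                     = m i * H T + RInt (fun s => p s * u s i) 0 T).
  { rewrite (RInt_ext_R _ (fun s => m i * (exp (- F s) * he s) + p s * u s i)).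
    - assert (Ieh : ex_RInt (fun s => exp (- F s) * he s) 0 T)
        by (apply (@ex_RInt_continuous R_CompleteNormedModule); intros; apply exp_opp_F_he_continuous).
      rewrite RInt_plus_R, RInt_scal_R; auto.
      + apply (@ex_RInt_scal R_NormedModule); auto.
      + apply ex_RInt_cont_on; auto; lra.
    - rewrite Rmin_left, Rmax_right by lra. intros s Hs.
      unfold p, he, ge. rewrite !extend_id by lra. ring. }
  assert (Hvar := linear_ode_integrated 0 T fe F (fun s => x s i) _ HT F_derive Cx Cr Dx').
  rewrite F_0, Ropp_0, exp_0, Hx0, Hforcing, exp_Ropp in Hvar.
  assert (HFT := exp_pos (F T)).
  replace (x T i) with (exp (F T) * (/ exp (F T) * x T i)) by (field; lra).
  f_equal. lra.
Qed.

Lemma ustar_component_cost_le d u x i : (i < d)%nat ->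
  admissible_control d T u -> is_trajectory d T f h g m x0 u x ->
  / 2 * RInt (fun t => us t i ^ 2) 0 T + gam / 2 * (xs T i - xT i) ^ 2
  <= / 2 * RInt (fun t => u t i ^ 2) 0 T + gam / 2 * (x T i - xT i) ^ 2.
Proof.
  intros Hi Hu Hx.
  rewrite (trajectory_terminal_state d u x i), (trajectory_terminal_state d us xs i)
    by auto using ustar_admissible, xstar_trajectory.
  change (scalar_lq_cost T gam (x0 i + m i * H T) (exp (F T)) (xT i) p (fun s => us s i)
          <= scalar_lq_cost T gam (x0 i + m i * H T) (exp (F T)) (xT i) p (fun s => u s i)).
  rewrite (scalar_lq_cost_ext _ _ _ _ _ _ _ (fun s => lam i * p s))
    by (auto; intros; apply ustar_eq; auto).
  apply scalar_lq_gain_optimal; auto.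
  - apply (@ex_RInt_continuous R_CompleteNormedModule); intros; apply p2_continuous.
  - apply ex_RInt_cont_on; [lra |]. apply cont_on_mult; [lra | | apply Hu; auto].
    apply cont_on_continuous; intros; apply p_continuous.
  - apply (admissible_sq_integrable d); auto.
Qed.

End LinearQuadraticControl.

Theorem theorem4p1 (T : R) (d : nat) (gam : R) (f h g : R -> R) (m x0 xT : vec) :
  0 < T -> (1 <= d)%nat -> 0 < gam ->
  cont_on 0 T f -> cont_on 0 T h -> cont_on 0 T g ->
  let xs := xstar T gam f h g m x0 xT in
  let us := ustar T gam f h g m xT xs in
  (* the feedback controller u* applied along x* is admissible and generates x* *)
  admissible_control d T us /\
  is_trajectory d T f h g m x0 us xs /\
  (* and it is optimal among all admissible controls *)
  (forall (u : R -> vec) (x : R -> vec),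
      admissible_control d T u -> is_trajectory d T f h g m x0 u x ->
      cost d T gam xT us xs <= cost d T gam xT u x).
Proof.
  intros HT Hd Hgam Hf Hh Hg xs us.
  assert (Hus : admissible_control d T us) by (apply ustar_admissible; auto).
  split; [exact Hus |]. split; [apply xstar_trajectory; auto |].
  intros u x Hu Hx.
  rewrite !cost_componentwise by (auto; lra).
  apply sum_Rle. intros i Hi.
  apply (ustar_component_cost_le T gam f h g m x0 xT HT Hgam Hf Hh Hg d); auto; lia.
Qed.
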